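(* Let $p\in\{1,\infty\}$ and let $\mathcal J \subseteq 2^{[m]}$ be a nonempty family of forbidden supports for $\mathcal P_{0/p}$. Define $J^{none} := [m]\setminus \bigcup_{J\in\mathcal J} J$ and $J^{some} := [m]\setminus\big(J^{none}\cup \bigcap_{J\in\mathcal J} J\big)$. Then the forbidden support family inequality $$\sum_{j\in J^{none}} 2\, b_j + \sum_{j \in J^{some}} b_j \;\ge\; 2$$ is valid for $\mathsf{MIP}_{0/p}$: every feasible solution $(x,w,b)$ of $\mathsf{MIP}_{0/p}$ satisfies it.
   Context: Data: a matrix $H=(h_{ij}) \in \mathbb{R}^{n\times m}$, a vector $y \in \mathbb{R}^n$, thresholds $\alpha_1 \ge 0$ and $\alpha_\infty \ge 0$, and a constant $M>0$. For a positive integer $t$, write $[t]=\{1,\dots,t\}$. For $J\subseteq[m]$, $H^J$ denotes the submatrix of $H$ consisting of the columns indexed by $J$, and $x^J$ the subvector of $x$ indexed by $J$. A set $J \subseteq [m]$ is a forbidden support for $\mathcal P_{0/p}$ if $\min_{x^J} \|y - H^J x^J\|_p > \alpha_p$, i.e. there is no $x \in \mathbb{R}^m$ with $x_j = 0$ for all $j \notin J$ and $\|y - Hx\|_p \le \alpha_p$. $\mathsf{MIP}_{0/1}$ is the set of $(x,w,b) \in \mathbb{R}^m \times \mathbb{R}^n \times \{0,1\}^m$ satisfying $-Mb_j \le x_j \le M b_j$ for all $j\in[m]$, $-w_i \le y_i - \sum_{j\in[m]} h_{ij}x_j \le w_i$ for all $i \in [n]$, and $\sum_{i\in[n]} w_i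 \le \alpha_1$. $\mathsf{MIP}_{0/\infty}$ is the set of $(x,w,b) \in \mathbb{R}^m \times \mathbb{R} \times \{0,1\}^m$ satisfying $-Mb_j \le x_j \le M b_j$ for all $j\in[m]$, $-w \le y_i - \sum_{j\in[m]} h_{ij}x_j \le w$ for all $i \in [n]$, and $w \le \alpha_\infty$. An inequality in the variables $b$ is valid for $\mathsf{MIP}_{0/p}$ if it is satisfied by every feasible point of $\mathsf{MIP}_{0/p}$. *)

From HB Require Import structures.
From mathcomp Require Import all_boot all_order all_algebra.
Set Implicit Arguments. Unset Strict Implicit. Unset Printing Implicit Defensive.
Import Order.TTheory GRing.Theory Num.Theory.
Local Open Scope ring_scope.

Inductive pchoice := P1 | Pinf.

Section Defs.
Variables (R : realFieldType) (n m : nat).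

Definition resid (H : 'M[R]_(n, m)) (y : 'I_n -> R) (x : 'I_m -> R) (i : 'I_n) : R :=
  y i - \sum_(j < m) H i j * x j.

Definition norm1 (r : 'I_n -> R) : R := \sum_(i < n) `|r i|.
Definition norminf (r : 'I_n -> R) : R := \big[Num.max/0]_(i < n) `|r i|.

Definition pnorm (p : pchoice) (r : 'I_n -> R) : R :=
  match p with P1 => norm1 r | Pinf => norminf r end.

Definition alpha_p (p : pchoice) (alpha1 alphainf : R) : R :=
  match p with P1 => alpha1 | Pinf => alphainf end.

Definition forbidden_support (p : pchoice) (H : 'M[R]_(n, m)) (y : 'I_n -> R)
    (alpha1 alphainf : R) (J : {set 'I_m}) : Prop :=
  ~ exists x : 'I_m -> R,
      (forall j, j \notin J -> x j = 0) /\
      pnorm p (resid H y x) <= alpha_p p alpha1 alphainf.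

Definition MIP01 (H : 'M[R]_(n, m)) (y : 'I_n -> R) (alpha1 M : R)
    (x : 'I_m -> R) (w : 'I_n -> R) (b : 'I_m -> bool) : Prop :=
  (forall j, - (M * (b j)%:R) <= x j /\ x j <= M * (b j)%:R) /\
  (forall i, - w i <= y i - \sum_(j < m) H i j * x j /\
             y i - \sum_(j < m) H i j * x j <= w i) /\
  \sum_(i < n) w i <= alpha1.

Definition MIP0inf (H : 'M[R]_(n, m)) (y : 'I_n -> R) (alphainf M : R)
    (x : 'I_m -> R) (w : R) (b : 'I_m -> bool) : Prop :=
  (forall j, - (M * (b j)%:R) <= x j /\ x j <= M * (b j)%:R) /\
  (forall i, - w <= y i - \sum_(j < m) H i j * x j /\
             y i - \sum_(j < m) H i j * x j <= w) /\
  w <= alphainf.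

Definition valid_for_MIP (p : pchoice) (H : 'M[R]_(n, m)) (y : 'I_n -> R)
    (alpha1 alphainf M : R) (ineq : ('I_m -> bool) -> Prop) : Prop :=
  match p with
  | P1 => forall x w b, MIP01 H y alpha1 M x w b -> ineq b
  | Pinf => forall x w b, MIP0inf H y alphainf M x w b -> ineq b
  end.

Definition Jnone (F : {set {set 'I_m}}) : {set 'I_m} :=
  ~: \bigcup_(J in F) J.

Definition Jsome (F : {set {set 'I_m}}) : {set 'I_m} :=
  ~: (Jnone F :|: \bigcap_(J in F) J).

Definition FSF_ineq (F : {set {set 'I_m}}) (b : 'I_m -> bool) : Prop :=
  \sum_(j in Jnone F) 2 * (b j)%:R + \sum_(j in Jsome F) (b j)%:R >= 2 :> R.

End Defs.

From mathcomp Require Import all_boot all_order all_algebra.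
Import Order.TTheory GRing.Theory Num.Theory.
Local Open Scope ring_scope.

(* Let (x, w, b) be feasible for MIP_{0/p} and let S be the set of indices
   j with b_j = 1.  The big-M constraints force x to vanish outside S, and
   the residual constraints force ||y - Hx||_p <= alpha_p; hence x witnesses
   that S is not contained in any forbidden support.  So S "escapes" every
   J in the family: each J misses some index of S.

   The inequality then follows from a purely combinatorial fact: if a set S
   escapes every member of a nonempty family F, then
   2 |S n J^none| + |S n J^some| >= 2.  Either S meets J^none, or S meets
   two distinct indices of J^some: one escaping some J0 in F, and, since it
   lies in some J1 in F, another one escaping J1. *)

Lemma bigM_support (R : numDomainType) (M xj : R) (bj : bool) :
  - (M * bj%:R) <= xj <= M * bj%:R -> ~~ bj -> xj = 0.
Proof.
by move=> hx /negbTE bj0; move: hx; rewrite bj0 mulr0 oppr0 -eq_le => /eqP.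
Qed.

Lemma MIP01_norm (R : realFieldType) (n m : nat) (H : 'M[R]_(n, m))
    (y : 'I_n -> R) (alpha1 M : R) x w b :
  MIP01 H y alpha1 M x w b -> norm1 (resid H y x) <= alpha1.
Proof.
move=> [_ [hres hsum]]; apply: le_trans hsum; apply: ler_sum => i _.
by rewrite /resid ler_norml; case: (hres i) => -> ->.
Qed.

(* Under the MIP_{0/oo} residual constraints, ||y - Hx||_oo <= alpha_oo;
   the nonnegativity of alpha_oo covers the case n = 0. *)
Lemma MIP0inf_norm (R : realFieldType) (n m : nat) (H : 'M[R]_(n, m))
    (y : 'I_n -> R) (alphainf M : R) x w b :
  0 <= alphainf ->
  MIP0inf H y alphainf M x w b -> norminf (resid H y x) <= alphainf.
Proof.
move=> halpha [_ [hres hw]]; rewrite /norminf.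
elim/big_ind: _ => // [a c ha hc | i _]; first by rewrite ge_max ha hc.
apply: le_trans hw; rewrite /resid ler_norml.
by case: (hres i) => -> ->.
Qed.

Lemma forbidden_support_escape (R : realFieldType) (n m : nat) p
    (H : 'M[R]_(n, m)) y alpha1 alphainf (J S : {set 'I_m}) (x : 'I_m -> R) :
  forbidden_support p H y alpha1 alphainf J ->
  (forall j, j \notin S -> x j = 0) ->
  pnorm p (resid H y x) <= alpha_p p alpha1 alphainf ->
  ~~ (S \subset J).
Proof.
move=> hJ hxS hnorm; apply/negP => sSJ; apply: hJ; exists x; split => //.
by move=> j jJ; apply: hxS; apply: contra jJ; apply: (subsetP sSJ).
Qed.

Section Counting.
Variables (m : nat) (F : {set {set 'I_m}}).

Lemma in_Jsome {j J} : J \in F -> j \notin Jnone F -> j \notin J -> j \in Jsome F.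
Proof.
move=> JF jnone jJ; rewrite /Jsome in_setC in_setU negb_or jnone /=.
by apply: contra jJ => /bigcapP; apply.
Qed.

Lemma escaping_set_weight (S : {set 'I_m}) :
  F != set0 -> (forall J, J \in F -> ~~ (S \subset J)) ->
  (2 <= 2 * #|S :&: Jnone F| + #|S :&: Jsome F|)%N.
Proof.
move=> /set0Pn [J0 J0F] hS.
case: (posnP #|S :&: Jnone F|) => [Snone | hpos]; last first.
  by apply: leq_trans (leq_addr _ _); apply: leq_pmulr.
have outside_none j : j \in S -> j \notin Jnone F.
  move=> jS; apply: contraT; rewrite negbK => jn.
  have : j \in S :&: Jnone F by rewrite inE jS jn.
  by rewrite (cards0_eq Snone) inE.
have [j1 j1S j1J0] := subsetPn (hS J0 J0F).
have : j1 \notin Jnone F := outside_none j1 j1S.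
rewrite in_setC negbK => /bigcupP [J1 J1F j1J1].
have [j2 j2S j2J1] := subsetPn (hS J1 J1F).
suff : (1 < #|S :&: Jsome F|)%N by move=> h; apply: leq_trans h (leq_addl _ _).
apply/card_gt1P; exists j1, j2; split.
- by rewrite inE j1S (in_Jsome J0F (outside_none _ j1S) j1J0).
- by rewrite inE j2S (in_Jsome J1F (outside_none _ j2S) j2J1).
- by apply: contraNneq j2J1 => <-.
Qed.

Lemma sum_indicator (R : numDomainType) (b : 'I_m -> bool) (A : {set 'I_m}) :
  \sum_(j in A) (b j)%:R = #|[set j | b j] :&: A|%:R :> R.
Proof.
rewrite -sum1_card natr_sum [RHS]big_mkcond [LHS]big_mkcond /=.
by apply: eq_bigr => j _; rewrite !inE andbC; case: (j \in A); case: (b j).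
Qed.

Lemma FSF_ineq_of_escaping (R : realFieldType) (b : 'I_m -> bool) :
  F != set0 -> (forall J, J \in F -> ~~ ([set j | b j] \subset J)) ->
  @FSF_ineq R m F b.
Proof.
move=> hFne hS; rewrite /FSF_ineq -mulr_sumr !sum_indicator.
rewrite -natrM -natrD (ler_nat R 2); exact: escaping_set_weight.
Qed.

End Counting.

Theorem proposition3 (R : realFieldType) (n m : nat) (H : 'M[R]_(n, m))
    (y : 'I_n -> R) (alpha1 alphainf M : R)
    (halpha1 : 0 <= alpha1) (halphainf : 0 <= alphainf) (hM : 0 < M)
    (p : pchoice) (F : {set {set 'I_m}})
    (hFne : F != set0)
    (hF : forall J, J \in F -> forbidden_support p H y alpha1 alphainf J) :
  valid_for_MIP p H y alpha1 alphainf M (@FSF_ineq R m F).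
Proof.
have escape (x : 'I_m -> R) (b : 'I_m -> bool) :
    (forall j, - (M * (b j)%:R) <= x j <= M * (b j)%:R) ->
    pnorm p (resid H y x) <= alpha_p p alpha1 alphainf ->
    @FSF_ineq R m F b.
  move=> hbox hnorm; apply: FSF_ineq_of_escaping => // J JF.
  apply: forbidden_support_escape (hF J JF) _ hnorm => j.
  by rewrite inE; apply: bigM_support.
case: p hF escape => hF escape x w b feas; apply: escape.
- by case: feas => hbox _ j; apply/andP; apply: hbox.
- exact: MIP01_norm feas.
- by case: feas => hbox _ j; apply/andP; apply: hbox.
- exact: MIP0inf_norm feas.
Qed.
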